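(* In the even setting below, define recursively, for all $k\in\mathbb Z$ and $\ell\ge 0$, block columns $G^{(k)}_{2\ell}$, $\hat G^{(k)}_{2\ell+1}$ (of size $mn\times n$) and $n\times n$ matrices $\alpha_i^j(k)$ by $G^{(k)}_0=r_k$, $\hat G^{(k)}_{2\ell+1}=p_k\,(G^{(k+1)}_{2\ell})_{\mathrm{last}}+\Gamma G^{(k+1)}_{2\ell}$, $G^{(k)}_{2\ell+2}=\Gamma\hat G^{(k+1)}_{2\ell+1}$, $\alpha_0^{2\ell+1}(k)=(G^{(k+1)}_{2\ell})_{\mathrm{last}}$, $\alpha_{2r}^{2\ell+1}(k)=\alpha_{2r-1}^{2\ell}(k+1)$ for $1\le r\le \ell$, $\alpha_{2r+1}^{2\ell+2}(k)=\alpha_{2r}^{2\ell+1}(k+1)$ for $0\le r\le\ell$. Then for all $k$ and all $\ell\ge 0$, $$F^{(k)}_{2\ell}=\sum_{r=1}^{\ell}F^{(k)}_{2r-1}\alpha_{2r-1}^{2\ell}(k)+G^{(k)}_{2\ell},\qquad F^{(k)}_{2\ell+1}=\sum_{r=0}^{\ell}F^{(k)}_{2r}\alpha_{2r}^{2\ell+1}(k)+\hat G^{(k)}_{2\ell+1}.$$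
   Context: Even setting: integers $n\ge1$, $s\ge 2$, $m=2s$. For each $k\in\mathbb Z$ let $a_k^0,\dots,a_k^{m-1}$ be $n\times n$ matrices, $N$-periodic in $k$. $Q_k$ is the $mn\times mn$ block matrix with $I_n$ in the blocks $(i+1,i)$, $i=1,\dots,m-1$, last block column $(a_k^0;a_k^1;\dots;a_k^{m-1})$, and $O_n$ elsewhere. $r_k$ is the block column $(O_n;a_k^1;O_n;a_k^3;\dots;O_n;a_k^{2s-1})$ and $p_k=(a_k^0;O_n;a_k^2;O_n;\dots;a_k^{2s-2};O_n)$ (so the last block column of $Q_k$ is $p_k+r_k$). $\Gamma$ is the $mn\times mn$ block matrix with $I_n$ in blocks $(i+1,i)$ and $O_n$ elsewhere. $F^{(k)}_0=r_k$ and $F^{(k)}_\ell=Q_kQ_{k+1}\cdots Q_{k+\ell-1}r_{k+\ell}$ for $\ell\ge1$. For a block column $A$, $(A)_{\mathrm{last}}$ denotes its last $n\times n$ block. *)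

From HB Require Import structures.
From mathcomp Require Import all_boot all_order all_algebra.
Set Implicit Arguments. Unset Strict Implicit. Unset Printing Implicit Defensive.
Import Order.TTheory GRing.Theory Num.Theory.
Local Open Scope ring_scope.

Section EvenSetting.
Context {R : comRingType} (n m : nat).
(* a k j = a_k^j, for block index j : 'I_m *)
Variable a : int -> 'I_m -> 'M[R]_n.

(* mn x mn block matrices and mn x n block columns, with m blocks of size n *)
Definition bsz := (\sum_(i < m) n)%N.
Notation BM := 'M[R]_(bsz, bsz).
Notation BC := 'M[R]_(bsz, n).

Definition Qk (k : int) : BM :=
  \mxblock_(i < m, j < m)
    (if val i == (val j).+1 then (1%:M : 'M[R]_n)
     else if val j == m.-1 then a k i else 0).

Definition Gam : BM :=
  \mxblock_(i < m, j < m)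
    (if val i == (val j).+1 then (1%:M : 'M[R]_n) else 0).

(* r_k = (O; a^1; O; a^3; ...), p_k = (a^0; O; a^2; O; ...) (blocks 0-indexed) *)
Definition rk (k : int) : BC := \mxcol_(i < m) (if odd i then a k i else 0).
Definition pk (k : int) : BC := \mxcol_(i < m) (if odd i then 0 else a k i).

Definition lastb (A : BC) : 'M[R]_n :=
  \sum_(i < m | val i == m.-1) submxcol A i.

Fixpoint Qprod (k : int) (l : nat) : BM :=
  match l with
  | 0 => 1%:M
  | l'.+1 => Qk k *m Qprod (k + 1) l'
  end.

Definition Fk (k : int) (l : nat) : BC :=
  if l is 0 then rk k else Qprod k l *m rk (k + l%:Z).

(* Gs j k : for j = 2l this is G^{(k)}_{2l}, for j = 2l+1 it is \hat G^{(k)}_{2l+1} *)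
Fixpoint Gs (j : nat) (k : int) : BC :=
  match j with
  | 0 => rk k
  | j'.+1 =>
      if odd j' then Gam *m Gs j' (k + 1)
      else pk k *m lastb (Gs j' (k + 1)) + Gam *m Gs j' (k + 1)
  end.

Definition Gev (k : int) (l : nat) : BC := Gs (2 * l) k.
Definition Ghat (k : int) (l : nat) : BC := Gs (2 * l + 1) k.

(* alpha i j k = alpha_i^j(k):
   alpha_0^{j+1}(k) = (G^{(k+1)}_j)_last (used for j = 2l),
   alpha_{i+1}^{j+1}(k) = alpha_i^j(k+1). Only the paper's index range is used. *)
Fixpoint alpha (i j : nat) (k : int) {struct i} : 'M[R]_n :=
  match i, j with
  | 0, j'.+1 => lastb (Gs j' (k + 1))
  | i'.+1, j'.+1 => alpha i' j' (k + 1)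
  | _, 0 => 0
  end.

End EvenSetting.

From HB Require Import structures.
From mathcomp Require Import all_boot all_order all_algebra.
Set Implicit Arguments.
Unset Strict Implicit.
Unset Printing Implicit Defensive.
Import Order.TTheory GRing.Theory Num.Theory.
Local Open Scope ring_scope.

(* Every companion matrix factors as Q_k x = Gamma x + (p_k + r_k) (x)_last, so
   multiplying the identities at level k+1 by Q_k shifts every F^(k+1)_j to
   F^(k)_(j+1) and turns G^(k+1)_(2l) into \hat G^(k)_(2l+1) + F^(k)_0 alpha_0.
   Going from odd to even levels, the correction term (p_k + r_k) (\hat G)_last
   vanishes: the blocks of G_(2l) at odd positions and those of \hat G_(2l+1) at
   even positions are the only nonzero ones (Gamma shifts the parity, p_k only
   fills even positions), and the last position m-1 is odd. *)

Section BlockRecursion.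
Variables (R : comNzRingType) (n m : nat) (a : int -> 'I_m -> 'M[R]_n).
Notation BC := 'M[R]_(bsz n m, n).
Notation Gam := (@Gam R n m).

Lemma submxcol_Gam_mul (x : BC) i :
  submxcol (Gam *m x) i =
  \sum_(j < m) (if val i == (val j).+1 then submxcol x j else 0).
Proof.
rewrite -[x]submxcolK /Gam mul_mxblock_mxrow mxcolK.
by apply: eq_bigr => j _; rewrite !mxcolK; case: ifP; rewrite ?mul1mx ?mul0mx.
Qed.

Lemma submxcol_pk k i : submxcol (pk a k) i = if odd i then 0 else a k i.
Proof. exact: mxcolK. Qed.

Lemma submxcol_rk k i : submxcol (rk a k) i = if odd i then a k i else 0.
Proof. exact: mxcolK. Qed.

Lemma Qk_mulmx k (x : BC) : Qk a k *m x = Gam *m x + (pk a k + rk a k) *m lastb x.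
Proof.
apply/mxcolP => i.
rewrite submxcolD submxcol_Gam_mul -[submxcol (_ *m lastb x) _]submxcol_mul.
rewrite submxcolD submxcol_pk submxcol_rk.
have -> : (if odd i then 0 else a k i) + (if odd i then a k i else 0) = a k i.
  by case: (odd i); rewrite ?addr0 ?add0r.
rewrite -[x in LHS]submxcolK /Qk mul_mxblock_mxrow mxcolK.
rewrite /lastb mulmx_sumr [X in _ = _ + X]big_mkcond -big_split /=.
apply: eq_bigr => j _; case: eqP => [ij | _].
  have -> : (val j == m.-1) = false.
    apply/negbTE/eqP => jm; move: (ltn_ord i); rewrite ij jm.
    by case: (m) => //= ?; rewrite ltnn.
  by rewrite mul1mx addr0.
by case: (val j == m.-1); rewrite add0r ?mul0mx.
Qed.

Lemma FkS k l : Fk a k l.+1 = Qk a k *m Fk a (k + 1) l.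
Proof.
rewrite /Fk /=; case: l => [|l]; first by rewrite mulmx1.
by rewrite mulmxA -addrA.
Qed.

Lemma Gs_oddS l k :
  Gs a (2 * l + 1) k = pk a k *m lastb (Gs a (2 * l) (k + 1)) + Gam *m Gs a (2 * l) (k + 1).
Proof. by rewrite addn1 /= oddM. Qed.

Lemma Gs_evenS l k : Gs a (2 * l.+1) k = Gam *m Gs a (2 * l + 1) (k + 1).
Proof. by rewrite mulnS addnC addn2 /= addn1 /= oddM. Qed.

Definition blocks_vanish (b : bool) (x : BC) :=
  forall i : 'I_m, odd i = b -> submxcol x i = 0.

Lemma blocks_vanishD b x y : blocks_vanish b x -> blocks_vanish b y -> blocks_vanish b (x + y).
Proof. by move=> vx vy i oi; rewrite submxcolD vx ?vy ?addr0. Qed.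

Lemma blocks_vanish_Gam b x : blocks_vanish b x -> blocks_vanish (~~ b) (Gam *m x).
Proof.
move=> vx i oi; rewrite submxcol_Gam_mul big1 // => j _.
by case: eqP => // ij; apply: vx; rewrite -[b]negbK -oi ij /= negbK.
Qed.

Lemma blocks_vanish_pk_mul k M : blocks_vanish true (pk a k *m M).
Proof. by move=> i oi; rewrite -submxcol_mul submxcol_pk oi mul0mx. Qed.

Lemma blocks_vanish_rk k : blocks_vanish false (rk a k).
Proof. by move=> i oi; rewrite submxcol_rk oi. Qed.

Lemma blocks_vanish_Gs l k :
  blocks_vanish false (Gs a (2 * l) k) /\ blocks_vanish true (Gs a (2 * l + 1) k).
Proof.
have odd_step l' (k' : int) : blocks_vanish false (Gs a (2 * l') (k' + 1)) ->
    blocks_vanish true (Gs a (2 * l' + 1) k').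
  move=> v; rewrite Gs_oddS; apply: blocks_vanishD; first exact: blocks_vanish_pk_mul.
  exact: (blocks_vanish_Gam v).
elim: l k => [|l IH] k.
  by split; [exact: blocks_vanish_rk | apply: odd_step; exact: blocks_vanish_rk].
have even_vanish k' : blocks_vanish false (Gs a (2 * l.+1) k').
  by rewrite Gs_evenS; exact: (blocks_vanish_Gam (IH _).2).
by split; [exact: even_vanish | apply: odd_step; exact: even_vanish].
Qed.

Hypothesis last_odd : odd m.-1.

Lemma lastb_vanish x : blocks_vanish true x -> lastb x = 0.
Proof. by move=> vx; rewrite /lastb big1 // => i /eqP im; apply: vx; rewrite im. Qed.

Definition F_even_decomp l k := Fk a k (2 * l) =
  \sum_(1 <= r < l.+1) Fk a k (2 * r - 1) *m alpha a (2 * r - 1) (2 * l) k + Gev a k l.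

Definition F_odd_decomp l k := Fk a k (2 * l + 1) =
  \sum_(0 <= r < l.+1) Fk a k (2 * r) *m alpha a (2 * r) (2 * l + 1) k + Ghat a k l.

Lemma odd_index_shift r : (2 * r.+1 - 1 = (2 * r).+1)%N.
Proof. by rewrite mulnS addnC addn2 subn1. Qed.

Lemma F_odd_decomp_from_even l : (forall k, F_even_decomp l k) -> forall k, F_odd_decomp l k.
Proof.
move=> IH k; rewrite /F_odd_decomp addn1 FkS IH mulmxDr mulmx_sumr Qk_mulmx.
rewrite /Ghat Gs_oddS /Gev big_add1 succnK big_nat_recl // mulmxDl.
have -> : \sum_(0 <= r < l) Qk a k *m (Fk a (k + 1) (2 * r.+1 - 1) *m
      alpha a (2 * r.+1 - 1) (2 * l) (k + 1)) =
    \sum_(0 <= r < l) Fk a k (2 * r.+1) *m alpha a (2 * r.+1) (2 * l).+1 k.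
  by apply: eq_bigr => r _; rewrite odd_index_shift mulnS addnC addn2 [Fk a k _]FkS mulmxA.
change (Fk a k (2 * 0) *m alpha a (2 * 0) (2 * l).+1 k)
  with (rk a k *m lastb (Gs a (2 * l) (k + 1))).
set g := Gam *m _; set p := pk a k *m _; set r := rk a k *m _.
by rewrite -!addrA [p + g]addrC [RHS]addrCA [r + (g + p)]addrCA [r + p]addrC.
Qed.

Lemma F_even_decomp_from_odd l : (forall k, F_odd_decomp l k) -> forall k, F_even_decomp l.+1 k.
Proof.
move=> IH k.
rewrite /F_even_decomp /Gev Gs_evenS.
have -> : (2 * l.+1 = (2 * l + 1).+1)%N by rewrite mulnS addnC addn1 addn2.
rewrite FkS IH mulmxDr mulmx_sumr Qk_mulmx /Ghat.
rewrite (lastb_vanish (blocks_vanish_Gs l (k + 1)).2) mulmx0 addr0 big_add1 succnK.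
congr (_ + _); apply: eq_bigr => r _.
by rewrite odd_index_shift [Fk a k _]FkS mulmxA.
Qed.

Lemma F_decomp l k : F_even_decomp l k /\ F_odd_decomp l k.
Proof.
have even0 k' : F_even_decomp 0 k' by rewrite /F_even_decomp big_geq // add0r.
elim: l k => [|l IH] k; first by split; [exact: even0 | exact: F_odd_decomp_from_even].
have even_l k' : F_even_decomp l.+1 k' by apply: F_even_decomp_from_odd => k''; exact: (IH _).2.
by split; [exact: even_l | exact: F_odd_decomp_from_even].
Qed.

End BlockRecursion.

Theorem mainTheorem2 (R : comRingType) (n s : nat) (hn : (1 <= n)%N) (hs : (2 <= s)%N)
  (N : nat) (hN : (0 < N)%N) (a : int -> 'I_(2 * s) -> 'M[R]_n)
  (hper : forall (k : int) (i : 'I_(2 * s)), a (k + N%:Z) i = a k i) :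
  forall (k : int) (l : nat),
    Fk a k (2 * l) =
      \sum_(1 <= r < l.+1) Fk a k (2 * r - 1) *m alpha a (2 * r - 1) (2 * l) k
      + Gev a k l
  /\ Fk a k (2 * l + 1) =
      \sum_(0 <= r < l.+1) Fk a k (2 * r) *m alpha a (2 * r) (2 * l + 1) k
      + Ghat a k l.
Proof.
move=> k l.
have last_odd : odd (2 * s).-1 by rewrite -(prednK (ltnW hs)) mulnS /= oddM.
exact: (F_decomp a last_odd l k).
Qed.
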